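(* Let $r\geq 2$ be an integer, and let $x_i$ ($1\le i\le r$) and $y_{i,j}$ ($1\le i\le j\le r$) be formal variables. Define \[ L(x,y)=\sum_{T\in\mathcal{U}_r}\prod_{v=2}^r\Big(x_{f_T(v)}\sum_{u\in \mathfrak{h}_T(v)} y_{v,u}\Big),\qquad R(x,y)=x_1\,y_{r,r}\prod_{i=2}^{r-1}\Bigg(\sum_{j=1}^{i} x_j\,y_{i,i}+\sum_{j=i+1}^{r} x_i\,y_{i,j}\Bigg). \] Then \[ \text{(a)}\quad y_{1,1}\,L(x,y)=\sum_{\pi\in\Pi_1(\{1,\dots,r\})} D(\pi)\sum_{T\in\mathcal{E}(\pi)}\kappa(T), \] \[ \text{(b)}\quad y_{1,1}\,R(x,y)=\sum_{\pi\in\Pi_1(\{1,\dots,r\})} D(\pi)\sum_{c\in\mathcal{C}(\pi)}\omega(c,\pi). \]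
   Context: Rooted trees have edges oriented towards the root; the head of an edge is the father of its tail (son); $f_T(v)$ is the father of a non-root vertex $v$. Descendants of a vertex are its sons and recursively their descendants; $u$ is a descendant of $v$ iff $v$ is an ancestor of $u$. An unordered increasing tree on a finite set $\mathcal{S}$ of positive integers is a rooted tree with vertex-set $\mathcal{S}$, sons unordered, such that every son has a larger label than its father. $\mathcal{U}_r$ is the set of unordered increasing trees on $\{1,\dots,r\}$. The hook $\mathfrak{h}_T(v)$ is $v$ together with its descendants. For an unordered increasing tree $T$, $\sigma_i(T)$ is the number of sons of $i$ and $\kappa(T)=\prod_{i\in V(T)}x_i^{\sigma_i(T)}$. $\Pi_1(\{1,\dots,r\})$ is the set of set partitions $\pi$ of $\{1,\dots,r\}$ having $\{1\}$ as a block. If $\pi$ has $k$ blocks, they are indexed $\pi_1,\dots,\pi_k$ so that their maxima $\mu_i=\max\pi_i$ satisfy $\mu_1<\dots<\mu_k$ (so $\pi_1=\{1\}$, $\mu_1=1$, $\mu_k=r$). A function $g:\mathcal{S}\to\mathcal{S}$ is dominating if $g(i)\ge i$ for all $i$; its weight is $\mathrm{wt}_g=\prod_{i\in\mathcal{S}}y_{i,g(i)}$. Its induced partition is the partition of $\mathcal{S}$ into the vertex-sets of the connected components (ignoring orientation) of the digraph with edges $(i,g(i))$. $\mathcal{D}(\pi)$ is the set of dominating functions on $\{1,\dots,r\}$ with induced partition $\pi$, and $D(\pi)=\sum_{g\in\mathcal{D}(\pi)}\mathrm{wt}_g$. $\mathcal{E}(\pi)$ is the set of unordered increasing trees on $\{1,\dots,r\}$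 such that for every two elements $i<j$ in the same block of $\pi$, $i$ is an ancestor of $j$. $\mathcal{C}(\pi)=\{(c_2,\dots,c_{k-1}):1\le c_i\le\mu_i\}$ (containing only the empty list if $k=2$), and for $c\in\mathcal{C}(\pi)$, \[ \omega(c,\pi)=\frac{x_{c_2}\cdots x_{c_{k-1}}}{x_{\mu_2}\cdots x_{\mu_k}}\prod_{i=1}^r x_i. \] *)

From HB Require Import structures.
From mathcomp Require Import all_boot all_order all_algebra.
Set Implicit Arguments. Unset Strict Implicit. Unset Printing Implicit Defensive.
Import Order.TTheory GRing.Theory Num.Theory.

(* Conventions: the vertex/label set {1,...,r} is represented by 'I_r,
   the ordinal i : 'I_r standing for the label i.+1.  Variables are
   x : nat -> R (x_i = x i) and y : nat -> nat -> R (y_{i,j} = y i j),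
   always applied to labels (i.e. to i.+1 for i : 'I_r). *)

(* Unordered increasing trees on {1..r}: a tree is encoded by its father
   function f (with f v < v for every non-root v; the root, necessarily the
   label 1 = index 0, is sent to itself as a dummy value). *)
Definition utrees (r : nat) : {set {ffun 'I_r -> 'I_r}} :=
  [set f : {ffun 'I_r -> 'I_r} |
     [forall v : 'I_r, if val v == 0%N then val (f v) == 0%N else (f v < v)%N]].

Definition anc (r : nat) (f : {ffun 'I_r -> 'I_r}) (u v : 'I_r) : bool :=
  (u != v) && [exists k : 'I_r, iter k.+1 (fun w => f w) v == u].

Definition hook (r : nat) (f : {ffun 'I_r -> 'I_r}) (v : 'I_r) : {set 'I_r} :=
  [set u | (u == v) || anc f v u].

Definition nsons (r : nat) (f : {ffun 'I_r -> 'I_r}) (i : 'I_r) : nat :=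
  #|[set v : 'I_r | (0 < val v)%N && (f v == i)]|.

Section Poly.
Local Open Scope ring_scope.
Variable R : fieldType.

Definition kappa (x : nat -> R) (r : nat) (f : {ffun 'I_r -> 'I_r}) : R :=
  \prod_(i : 'I_r) x i.+1 ^+ nsons f i.

Definition Lxy (x : nat -> R) (y : nat -> nat -> R) (r : nat) : R :=
  \sum_(f in utrees r)
     \prod_(v : 'I_r | (0 < val v)%N)
        (x (f v).+1 * \sum_(u in hook f v) y v.+1 u.+1).

Definition Rxy (x : nat -> R) (y : nat -> nat -> R) (r : nat) : R :=
  x 1%N * y r r *
  \prod_(2 <= i < r)
     (\sum_(1 <= j < i.+1) x j * y i i + \sum_(i.+1 <= j < r.+1) x i * y i j).
End Poly.

Definition Pi1 (r : nat) : {set {set {set 'I_r}}} :=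
  [set P : {set {set 'I_r}} |
     partition P [set: 'I_r] && ([set i : 'I_r | val i == 0%N] \in P)].

Definition dominating (r : nat) : {set {ffun 'I_r -> 'I_r}} :=
  [set g : {ffun 'I_r -> 'I_r} | [forall i : 'I_r, (val i <= val (g i))%N]].

Definition grel (r : nat) (g : {ffun 'I_r -> 'I_r}) : rel 'I_r :=
  fun a b => (g a == b) || (g b == a).

Definition induced_partition (r : nat) (g : {ffun 'I_r -> 'I_r})
  : {set {set 'I_r}} :=
  [set [set j | connect (grel g) i j] | i : 'I_r].

Definition bmax (r : nat) (B : {set 'I_r}) : nat := \max_(i in B) i.+1.

Definition Eset (r : nat) (P : {set {set 'I_r}}) : {set {ffun 'I_r -> 'I_r}} :=
  [set f in utrees r |
     [forall B in P, forall i in B, forall j in B, (val i < val j)%N ==> anc f i j]].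

(* C(pi): c_i is attached to the block pi_i (2 <= i <= k-1), i.e. to the
   blocks other than pi_1 = {1} (max 1) and pi_k (max r); the value c B
   stands for the label (c B).+1; unused entries are normalized to 0. *)
Definition middle (r : nat) (P : {set {set 'I_r}}) (B : {set 'I_r}) : bool :=
  [&& B \in P, bmax B != 1%N & bmax B != r].

Definition Cset (r : nat) (P : {set {set 'I_r}})
  : {set {ffun {set 'I_r} -> 'I_r}} :=
  [set c : {ffun {set 'I_r} -> 'I_r} |
     [forall B : {set 'I_r},
        if middle P B then ((c B).+1 <= bmax B)%N else val (c B) == 0%N]].

Section Poly2.
Local Open Scope ring_scope.
Variable R : fieldType.

Definition Dw (y : nat -> nat -> R) (r : nat) (P : {set {set 'I_r}}) : R :=
  \sum_(g in dominating r | induced_partition g == P)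
     \prod_(i : 'I_r) y i.+1 (g i).+1.

Definition omega (x : nat -> R) (r : nat) (c : {ffun {set 'I_r} -> 'I_r})
  (P : {set {set 'I_r}}) : R :=
  (\prod_(B : {set 'I_r} | middle P B) x (c B).+1)
  / (\prod_(B in P | bmax B != 1%N) x (bmax B))
  * \prod_(i : 'I_r) x i.+1.
End Poly2.

(* Both sides are sums over the dominating functions g with g(1) = 1, weighted
   by wt_g: grouping them by induced partition turns sum_pi D(pi) G(pi) into
   sum_g wt_g G(pi_g).

   (a) For a tree T, expanding y_{1,1} prod_(v >= 2) sum_(u in h_T(v)) y_{v,u}
   produces wt_g for exactly the g with g(v) in h_T(v) for all v.  These are the
   g with T in E(pi_g): iterating g descends in T, so every element of a block
   of pi_g is an ancestor of the block's largest element, and blocks are chains;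
   conversely v < g(v) in a chain means g(v) is a descendant of v.  Exchanging
   the sums over T and g gives (a).

   (b) The blocks of pi_g are indexed by the fixed points of g, which are their
   maxima, so sum_c omega(c, pi_g) is a product over i of factors depending only
   on i and g(i).  The sum over g of wt_g times this product then factors as a
   product over i, which is y_{1,1} R(x,y). *)

From Pilot Require Import Defs.
From HB Require Import structures.
From mathcomp Require Import all_boot all_order all_algebra.

Set Implicit Arguments.
Unset Strict Implicit.
Unset Printing Implicit Defensive.

Import GRing.Theory.

Section Ancestors.
Variables (r : nat) (f : {ffun 'I_r -> 'I_r}).

Lemma anc_fconnect u v : anc f u v = (u != v) && fconnect f v u.
Proof.
rewrite /anc; have [//|neq_uv /=] := eqVneq u v.
apply/existsP/idP => [[k /eqP <-]|fvu]; first exact: (fconnect_iter f k.+1 v).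
have order_le_r : (order f v <= r)%N by rewrite -[r in (_ <= r)%N]card_ord max_card.
have := leq_trans (findex_max fvu) order_le_r; have := iter_findex fvu.
have : findex f v u != 0%N by rewrite findex_eq0 eq_sym.
by case: (findex f v u) => // n _ <- /ltnW lt_n_r; exists (Ordinal lt_n_r).
Qed.

Lemma mem_hook u v : (u \in hook f v) = fconnect f u v.
Proof.
by rewrite inE anc_fconnect; have [->|] //= := eqVneq u v; rewrite connect0.
Qed.

Lemma fconnect_total a b m :
  fconnect f m a -> fconnect f m b -> fconnect f a b || fconnect f b a.
Proof.
move=> /iter_findex <- /iter_findex <-.
case: (leqP (findex f m a) (findex f m b)) => [le_ab | /ltnW le_ba].
  by rewrite -(subnK le_ab) iterD fconnect_iter.
by rewrite -(subnK le_ba) iterD fconnect_iter orbT.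
Qed.

End Ancestors.

Section DominatingFunctions.
Variables (r : nat) (g : {ffun 'I_r -> 'I_r}).
Hypothesis g_dom : g \in dominating r.

Lemma dominatingP i : (val i <= val (g i))%N.
Proof. by move: g_dom; rewrite inE => /forallP. Qed.

Lemma leq_iter_dominating k i : (val i <= val (iter k g i))%N.
Proof. by elim: k => //= k IHk; apply: leq_trans IHk (dominatingP _). Qed.

(* The label strictly increases along the iterates of g until a fixed point
   is met; as labels are below r, the r-th iterate is a fixed point. *)
Definition dom_root i := iter r g i.

Lemma iter_dominating_fixed_or_ge k i :
  (g (iter k g i) == iter k g i) || (k <= val (iter k g i))%N.
Proof.
elim: k => [|k IHk]; first by rewrite orbT.
have [fix_k|nfix_k] := eqVneq (g (iter k g i)) (iter k g i).
  by rewrite iterS !fix_k eqxx.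
move: IHk; rewrite (negbTE nfix_k) /= => le_k; apply/orP; right.
apply: leq_ltn_trans le_k _.
by rewrite ltn_neqAle dominatingP andbT (inj_eq val_inj) eq_sym.
Qed.

Lemma dom_root_fixed i : g (dom_root i) = dom_root i.
Proof.
have := iter_dominating_fixed_or_ge r i.
by rewrite leqNgt ltn_ord orbF => /eqP.
Qed.

Lemma dom_root_father i : dom_root (g i) = dom_root i.
Proof. by rewrite /dom_root -iterSr iterS dom_root_fixed. Qed.

Lemma dom_root_idem i : dom_root (dom_root i) = dom_root i.
Proof. exact/iter_fix/dom_root_fixed. Qed.

Lemma leq_dom_root i : (val i <= val (dom_root i))%N.
Proof. exact: leq_iter_dominating. Qed.

Lemma connect_grelE i j : connect (Defs.grel g) i j = (dom_root i == dom_root j).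
Proof.
have grel_sym : symmetric (Defs.grel g) by move=> a b; rewrite /Defs.grel orbC.
have connect_iter a k : connect (Defs.grel g) a (iter k g a).
  elim: k => [|k IHk]; first exact: connect0.
  by apply: connect_trans IHk (connect1 _); rewrite /Defs.grel eqxx.
apply/idP/eqP => [/connectP[p]|eq_root].
  elim: p i => [|a p IHp] i /=; first by move=> _ ->.
  move=> /andP[grel_ia /IHp IH] /IH <-.
  by case/orP: grel_ia => /eqP <-; rewrite dom_root_father.
apply: connect_trans (connect_iter i r) _.
by rewrite (sym_connect_sym grel_sym) -/(dom_root i) eq_root connect_iter.
Qed.

Definition dom_block i := [set j | dom_root i == dom_root j].

Lemma induced_partitionE : induced_partition g = [set dom_block i | i : 'I_r].
Proof.
by apply/setP=> B; apply/imsetP/imsetP => -[i _ ->]; exists i => //;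
  apply/setP=> j; rewrite !inE connect_grelE.
Qed.

Lemma induced_partition_fixed :
  induced_partition g = dom_block @: [set i | g i == i].
Proof.
rewrite induced_partitionE; apply/setP => B.
apply/imsetP/imsetP => -[i fix_i ->]; last by exists i.
exists (dom_root i); first by rewrite inE dom_root_fixed.
by apply/setP => j; rewrite !inE dom_root_idem.
Qed.

Lemma dom_block_inj : {in [set i | g i == i] &, injective dom_block}.
Proof.
move=> i j; rewrite !inE => /eqP fix_i /eqP fix_j eq_ij.
have : j \in dom_block i by rewrite eq_ij inE eqxx.
by rewrite inE /dom_root !iter_fix // => /eqP.
Qed.

Lemma bmax_dom_block i : g i = i -> bmax (dom_block i) = i.+1.
Proof.
move=> fix_i; have root_i : dom_root i = i by apply: iter_fix.
apply/eqP; rewrite eqn_leq; apply/andP; split.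
  by apply/bigmax_leqP => j; rewrite inE root_i => /eqP ->; rewrite ltnS leq_dom_root.
by apply: (@leq_bigmax_cond _ _ (fun j : 'I_r => j.+1) i); rewrite inE.
Qed.

Lemma induced_partition_partition : partition (induced_partition g) [set: 'I_r].
Proof.
have -> : induced_partition g =
    equivalence_partition (fun i j => dom_root i == dom_root j) [set: 'I_r].
  by rewrite induced_partitionE; apply/setP=> B; apply/imsetP/imsetP => -[i _ ->];
    exists i => //; apply/setP => j; rewrite !inE.
apply: equivalence_partitionP => a b c _ _ _ /=.
by split=> // /eqP ->.
Qed.

Lemma induced_partition_Pi1 : (0 < r)%N ->
  (induced_partition g \in Pi1 r) =
  [forall i, (val i == 0%N) ==> (val (g i) == 0%N)].
Proof.
move=> r_gt0; rewrite inE induced_partition_partition induced_partitionE /=.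
apply/imsetP/forallP => [[k _ Ek] i|fix0].
  have mem0 j : (val j == 0%N) = (j \in dom_block k) by rewrite -Ek inE.
  by apply/implyP; rewrite !mem0 !inE dom_root_father.
pose i0 := Ordinal r_gt0.
have fix_i0 : g i0 = i0 by apply/val_inj/eqP; have := fix0 i0; rewrite eqxx.
exists i0 => //; apply/setP => j; rewrite !inE /dom_root (iter_fix _ fix_i0).
apply/idP/eqP => [j0|root_j].
  by rewrite (_ : j = i0) ?(iter_fix _ fix_i0) //; apply/val_inj/eqP.
by have := leq_dom_root j; rewrite /dom_root -root_j leqn0.
Qed.

End DominatingFunctions.

Definition dom_edge r (i j : 'I_r) : bool :=
  (val i <= val j)%N && ((val i == 0%N) ==> (val j == 0%N)).

Lemma family_dom_edge r (g : {ffun 'I_r -> 'I_r}) :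
  (g \in family (@dom_edge r)) =
  (g \in dominating r) && [forall i : 'I_r, (val i == 0%N) ==> (val (g i) == 0%N)].
Proof.
apply/familyP/andP => [g_edge|[]]; rewrite ?inE.
  by split; apply/forallP => i; have /andP[] := g_edge i.
by move=> /forallP g_dom /forallP g_fix0 i; apply/andP.
Qed.

Section Weights.
Local Open Scope ring_scope.
Variables (R : fieldType) (y : nat -> nat -> R).

Definition dom_weight r (g : {ffun 'I_r -> 'I_r}) : R :=
  \prod_(i : 'I_r) y i.+1 (g i).+1.

Lemma sum_Pi1_Dw r (G : {set {set 'I_r}} -> R) : (0 < r)%N ->
  \sum_(P in Pi1 r) Dw y P * G P =
  \sum_(g in family (@dom_edge r)) dom_weight g * G (induced_partition g).
Proof.
move=> r_gt0.
rewrite (eq_bigl (fun g => (g \in dominating r) && (induced_partition g \in Pi1 r)));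
  last first.
  move=> g; rewrite family_dom_edge; case g_dom: (g \in dominating r) => //=.
  by rewrite induced_partition_Pi1.
rewrite (partition_big (@induced_partition r) (mem (Pi1 r))) /=; last by move=> g /andP[].
apply: eq_bigr => P P_Pi1; rewrite /Dw big_distrl /=.
apply: eq_big => [g|g /andP[_ /eqP -> //]].
by case: eqP => [->|]; rewrite ?P_Pi1 ?andbT ?andbF.
Qed.

End Weights.

Section IncreasingTrees.
Variables (r : nat) (f : {ffun 'I_r -> 'I_r}).
Hypothesis f_tree : f \in utrees r.

Lemma utree_father_le v : (val (f v) <= val v)%N.
Proof.
move: f_tree; rewrite inE => /forallP/(_ v).
by case: ifP => [/eqP -> /eqP -> | _ /ltnW].
Qed.

Lemma utree_fconnect_le u v : fconnect f v u -> (val u <= val v)%N.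
Proof.
move=> /iter_findex <-; elim: (findex f v u) => //= k IHk.
exact: leq_trans (utree_father_le _) IHk.
Qed.

(* The admissible choices u = g(v) in the expansion of y_{1,1} L(x,y). *)
Definition hook_edge (v u : 'I_r) : bool :=
  if val v == 0%N then val u == 0%N else u \in hook f v.

Section HookFamily.
Variable g : {ffun 'I_r -> 'I_r}.
Hypothesis g_hook : g \in family hook_edge.

Lemma hook_edge_fconnect a : fconnect f (g a) a.
Proof.
have := familyP g_hook a; rewrite unfold_in /hook_edge mem_hook.
case: ifP => // /eqP a0 /eqP ga0.
by rewrite (_ : g a = a) ?connect0 //; apply/val_inj; rewrite /= a0 ga0.
Qed.

Lemma hook_edge_dominating : g \in dominating r.
Proof.
by rewrite inE; apply/forallP => a; apply/utree_fconnect_le/hook_edge_fconnect.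
Qed.

Lemma hook_edge_dom_edge : g \in family (@dom_edge r).
Proof.
rewrite family_dom_edge hook_edge_dominating; apply/forallP => i.
by have := familyP g_hook i; rewrite unfold_in /hook_edge; case: (val i == 0%N).
Qed.

Lemma hook_edge_Eset : f \in Eset (induced_partition g).
Proof.
have g_dom := hook_edge_dominating.
have fconnect_root k a : fconnect f (iter k g a) a.
  elim: k => [|k IHk]; first exact: connect0.
  exact: connect_trans (hook_edge_fconnect _) IHk.
rewrite inE f_tree; apply/forallP => B; apply/implyP.
rewrite induced_partitionE // => /imsetP[k _ ->].
apply/forallP => i; apply/implyP; rewrite inE => /eqP root_ki.
apply/forallP => j; apply/implyP; rewrite inE => /eqP root_kj.
apply/implyP => lt_ij; rewrite anc_fconnect neq_ltn lt_ij /=.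
have root_j : fconnect f (dom_root g i) j by rewrite -root_ki root_kj fconnect_root.
have /orP[/utree_fconnect_le|//] := fconnect_total (fconnect_root r i) root_j.
by rewrite leqNgt lt_ij.
Qed.

End HookFamily.

Lemma Eset_hook_edge g : g \in family (@dom_edge r) ->
  f \in Eset (induced_partition g) -> g \in family hook_edge.
Proof.
rewrite family_dom_edge => /andP[g_dom /forallP g_fix0].
rewrite inE => /andP[_ /forallP f_chain].
apply/familyP => v; rewrite unfold_in /hook_edge.
case: ifP => [v0|_]; first by have := g_fix0 v; rewrite v0.
rewrite inE; have [->|neq_gv] //= := eqVneq (g v) v.
have block_v : dom_block g v \in induced_partition g.
  by rewrite induced_partitionE //; apply: imset_f.
move/implyP/(_ block_v)/forallP/(_ v)/implyP: (f_chain (dom_block g v)).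
rewrite inE eqxx => /(_ isT)/forallP/(_ (g v))/implyP.
rewrite inE dom_root_father // eqxx => /(_ isT)/implyP -> //.
by rewrite ltn_neqAle dominatingP // andbT (inj_eq val_inj) eq_sym neq_gv.
Qed.

Lemma family_hook_edge g : (g \in family hook_edge) =
  (g \in family (@dom_edge r)) && (f \in Eset (induced_partition g)).
Proof.
apply/idP/andP => [g_hook|[]]; last exact: Eset_hook_edge.
by split; [apply: hook_edge_dom_edge | apply: hook_edge_Eset].
Qed.

End IncreasingTrees.

Section TreeExpansion.
Local Open Scope ring_scope.
Variables (R : fieldType) (x : nat -> R) (y : nat -> nat -> R).

Lemma prod_father_kappa r (f : {ffun 'I_r -> 'I_r}) :
  \prod_(v : 'I_r | (0 < val v)%N) x (f v).+1 = kappa x f.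
Proof.
rewrite (partition_big (fun v => f v) xpredT) //=; apply: eq_bigr => i _.
rewrite /nsons -prodr_const; apply: eq_big => [v|v /andP[_ /eqP -> //]].
by rewrite inE.
Qed.

Lemma mul_Lxy r : (0 < r)%N ->
  y 1%N 1%N * Lxy x y r =
  \sum_(f in utrees r) kappa x f * \sum_(g in family (hook_edge f)) dom_weight y g.
Proof.
move=> r_gt0; rewrite /Lxy big_distrr; apply: eq_bigr => f _ /=.
rewrite big_split /= prod_father_kappa mulrCA; congr (_ * _).
rewrite /dom_weight -(bigA_distr_big_dep _ (fun v u : 'I_r => y v.+1 u.+1)).
rewrite [RHS](bigD1 (Ordinal r_gt0)) //=; congr (_ * _).
  by rewrite /hook_edge /= (big_pred1 (Ordinal r_gt0)) // => j; rewrite -(inj_eq val_inj).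
apply: eq_big => [v|v v_gt0]; first by rewrite -(inj_eq val_inj) /= lt0n.
by apply: eq_bigl => u; rewrite /hook_edge eqn0Ngt v_gt0.
Qed.

Lemma mul_Lxy_Pi1 r : (0 < r)%N ->
  y 1%N 1%N * Lxy x y r =
  \sum_(P in Pi1 r) Dw y P * \sum_(f in Eset P) kappa x f.
Proof.
move=> r_gt0; rewrite mul_Lxy // sum_Pi1_Dw //.
under eq_bigr => f f_tree.
  rewrite big_distrr (eq_bigl _ _ (family_hook_edge f_tree)); over.
rewrite (exchange_big_dep (mem (family (@dom_edge r)))) /=; last by move=> f g _ /andP[].
apply: eq_bigr => g g_edge; rewrite big_distrr.
apply: eq_big => [f|f _]; last exact: mulrC.
rewrite g_edge /=; apply/andP/idP => [[] //|f_E]; split => //.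
by move: f_E; rewrite inE => /andP[].
Qed.

End TreeExpansion.

Section OmegaSums.
Local Open Scope ring_scope.
Variables (R : fieldType) (x : nat -> R).

Definition prefix_sum r (m : nat) : R := \sum_(j : 'I_r | (j.+1 <= m)%N) x j.+1.

Lemma sum_Cset_omega r (P : {set {set 'I_r}}) : (0 < r)%N ->
  \sum_(c in Cset P) omega x c P =
  (\prod_(B | middle P B) prefix_sum r (bmax B)) /
  (\prod_(B in P | bmax B != 1%N) x (bmax B)) * \prod_(i : 'I_r) x i.+1.
Proof.
move=> r_gt0; rewrite /omega -!big_distrl /=; congr (_ * _ * _); symmetry.
pose i0 := Ordinal r_gt0.
transitivity (\prod_(B : {set 'I_r})
   \sum_(j : 'I_r | if middle P B then (j.+1 <= bmax B)%N else val j == 0%N)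
     (if middle P B then x j.+1 else 1)).
  rewrite [LHS]big_mkcond; apply: eq_bigr => B _; case: ifP => _ //.
  by rewrite (big_pred1 i0) // => j; rewrite /= -(inj_eq val_inj).
rewrite bigA_distr_big_dep; apply: eq_big => c.
  by rewrite [RHS]inE; apply/familyP/forallP => c_val B; have := c_val B; rewrite unfold_in.
by move=> _; rewrite [RHS]big_mkcond; apply: eq_bigr => B _; case: ifP.
Qed.

Lemma prod_induced_partition r (g : {ffun 'I_r -> 'I_r}) (F : nat -> R) (C : pred nat) :
  g \in dominating r ->
  \prod_(B in induced_partition g | C (bmax B)) F (bmax B) =
  \prod_(i : 'I_r | (g i == i) && C i.+1) F i.+1.
Proof.
move=> g_dom; rewrite big_mkcondr induced_partition_fixed //.
rewrite big_imset /=; last exact: dom_block_inj.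
rewrite [RHS]big_mkcondr; apply: eq_big => [i|i]; first by rewrite inE.
by rewrite inE => /eqP fix_i; rewrite bmax_dom_block.
Qed.

(* For pi induced by a dominating g, the block maxima are the fixed points of g,
   and summing omega over C(pi) replaces in prod_i x_i the factor of each fixed
   point i > 1 by x_1 + ... + x_i, or by 1 when i = r.  This is the resulting
   factor at index i, with g(i) = j. *)
Definition omega_factor r (i j : 'I_r) : R :=
  if val i == 0%N then x 1%N
  else if j == i then (if i.+1 != r then prefix_sum r i.+1 else 1)
  else x i.+1.

Lemma sum_Cset_omega_dominating r (g : {ffun 'I_r -> 'I_r}) :
  (0 < r)%N -> (forall i : nat, (1 <= i <= r)%N -> x i != 0) ->
  g \in dominating r ->
  \sum_(c in Cset (induced_partition g)) omega x c (induced_partition g) =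
  \prod_(i : 'I_r) omega_factor i (g i).
Proof.
move=> r_gt0 x_neq0 g_dom; rewrite sum_Cset_omega // /middle.
rewrite (prod_induced_partition (prefix_sum r) (fun m => (m != 1%N) && (m != r)) g_dom).
rewrite (prod_induced_partition x (fun m => m != 1%N) g_dom) /=.
pose block_max (i : 'I_r) := (g i == i) && (i.+1 != 1%N).
rewrite [X in _ * X](bigID block_max) /= -mulrA mulKf; last first.
  by apply/prodf_neq0 => i _; apply: x_neq0; rewrite /= ltn_ord.
rewrite [RHS](bigID block_max) /=; congr (_ * _).
  rewrite (eq_bigl (fun i : 'I_r => block_max i && (i.+1 != r))); last first.
    by move=> i; rewrite andbA.
  rewrite big_mkcondr; apply: eq_bigr => i /andP[/eqP fix_i i_neq0].
  by rewrite /omega_factor fix_i eqxx; move: i_neq0; rewrite eqSS => /negbTE ->.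
apply: eq_bigr => i; rewrite negb_and negbK => /orP[/negbTE nfix_i|/eqP [i0]].
  by rewrite /omega_factor nfix_i; case: ifP => // /eqP ->.
by rewrite /omega_factor -[val i]/(nat_of_ord i) i0.
Qed.

End OmegaSums.

Section Factorization.
Local Open Scope ring_scope.
Variables (R : fieldType) (x : nat -> R) (y : nat -> nat -> R).

Lemma sum_dom_edge_omega_factor r (i : 'I_r) : (0 < i)%N -> (i.+1 < r)%N ->
  \sum_(j | dom_edge i j) y i.+1 j.+1 * omega_factor x i j =
  \sum_(1 <= j < i.+2) x j * y i.+1 i.+1 + \sum_(i.+2 <= j < r.+1) x i.+1 * y i.+1 j.
Proof.
move=> i_gt0 i_lt; rewrite (bigD1 i) /=; last by rewrite /dom_edge leqnn implybb.
have i_neq0 : val i != 0%N by rewrite -lt0n.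
have i_neq_r : i.+1 != r by rewrite neq_ltn i_lt.
congr (_ + _).
  rewrite /omega_factor eqxx (negbTE i_neq0) i_neq_r -big_distrl mulrC /=.
  rewrite big_add1 big_mkord /prefix_sum.
  by rewrite (big_ord_widen r (fun j => x j.+1)) // ltnW.
rewrite big_add1 /= big_geq_mkord; apply: eq_big => [j|j /andP[_ j_neq_i]].
  by rewrite /dom_edge (negbTE i_neq0) andbT ltn_neqAle (inj_eq val_inj) eq_sym andbC.
by rewrite /omega_factor (negbTE i_neq0) (negbTE j_neq_i) mulrC.
Qed.

Lemma prod_sum_omega_factor n :
  \prod_(i < n.+2) \sum_(j | dom_edge i j) y i.+1 j.+1 * omega_factor x i j =
  y 1%N 1%N * Rxy x y n.+2.
Proof.
rewrite big_ord_recl big_ord_recr.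
have -> : lift ord0 (@ord_max n) = ord_max by apply: val_inj.
have first_factor :
    \sum_(j | dom_edge ord0 j) y 1%N j.+1 * omega_factor x (ord0 : 'I_n.+2) j =
    y 1%N 1%N * x 1%N.
  by rewrite (big_pred1 ord0) // => j; rewrite /dom_edge /= -(inj_eq val_inj).
have last_factor :
    \sum_(j | dom_edge ord_max j) y n.+2 j.+1 * omega_factor x (@ord_max n.+1) j =
    y n.+2 n.+2.
  rewrite (big_pred1 ord_max) /omega_factor /= ?eqxx ?mulr1 // => j.
  by rewrite /dom_edge /= andbT -(inj_eq val_inj) /= eqn_leq leq_ord.
rewrite first_factor last_factor /Rxy big_add1 big_add1 big_mkord /=.
rewrite -!mulrA; congr (_ * (_ * _)); rewrite mulrC; congr (_ * _).
apply: eq_bigr => i _.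
by rewrite sum_dom_edge_omega_factor lift0 // !ltnS; exact: (ltn_ord i).
Qed.

Lemma mul_Rxy_Pi1 r : (2 <= r)%N -> (forall i : nat, (1 <= i <= r)%N -> x i != 0) ->
  y 1%N 1%N * Rxy x y r =
  \sum_(P in Pi1 r) Dw y P * \sum_(c in Cset P) omega x c P.
Proof.
move=> r_ge2 x_neq0; have r_gt0 : (0 < r)%N by apply: leq_trans r_ge2.
rewrite sum_Pi1_Dw //.
under eq_bigr => g g_edge.
  have g_dom : g \in dominating r by move: g_edge; rewrite family_dom_edge => /andP[].
  rewrite sum_Cset_omega_dominating // /dom_weight -big_split /=; over.
rewrite -(bigA_distr_big_dep _ (fun i j : 'I_r => y i.+1 j.+1 * omega_factor x i j)).
by case: r r_ge2 {r_gt0 x_neq0} => [|[|n]] // _; rewrite prod_sum_omega_factor.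
Qed.

End Factorization.

Local Open Scope ring_scope.

Theorem proposition2p1 (R : fieldType) (r : nat) (hr : (2 <= r)%N)
  (x : nat -> R) (y : nat -> nat -> R)
  (hx : forall i : nat, (1 <= i <= r)%N -> x i != 0) :
  (y 1%N 1%N * Lxy x y r =
     \sum_(P in Pi1 r) Dw y P * \sum_(f in Eset P) kappa x f)
  /\
  (y 1%N 1%N * Rxy x y r =
     \sum_(P in Pi1 r) Dw y P * \sum_(c in Cset P) omega x c P).
Proof.
by split; [apply: mul_Lxy_Pi1; apply: leq_trans hr | apply: mul_Rxy_Pi1].
Qed.
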